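(* Let $a_1,\dots,a_n$ be pairwise distinct letters and let $\mathcal{G}=(N,T,P,S)$ be a context-free grammar in which every nonterminal is productive, every production has the form $A\to BC$, $A\to a_i$ or $A\to\varepsilon$ ($A,B,C\in N$), and $L(\mathcal{G})\subseteq a_1^*a_2^*\cdots a_n^*$. Let $\mathcal{G}'$ be obtained from $\mathcal{G}$ by adding the production $A\to\varepsilon$ for every $A\in N$. For $i\in[1,n]$ let $L_i=\{A\in N\mid A\Rightarrow^*_{\mathcal{G}'} a_iA\}$ and $R_i=\{A\in N\mid A\Rightarrow^*_{\mathcal{G}'} Aa_i\}$. Let $\mathcal{G}^\omega$ be the grammar over the new terminal letters $a_1^\omega,\dots,a_n^\omega$ obtained from $\mathcal{G}'$ by (i) removing all productions $A\to a_i$, (ii) adding $A\to a_i^\omega A$ for each $A\in L_i$, and (iii) adding $A\to A a_i^\omega$ for each $A\in R_i$. Then $a_1^\omega a_2^\omega\cdots a_n^\omega\in L(\mathcal{G}^\omega)$ if and only if $a_1^*a_2^*\cdots a_n^*\subseteq\downarrow L(\mathcal{G})$.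
   Context: $\downarrow L$ denotes the set of all (not necessarily contiguous) subwords of words in $L$. $A\Rightarrow^*_{\mathcal{G}'}w$ means that the sentential form $w\in(N\cup T)^*$ is derivable from $A$ in $\mathcal{G}'$. A nonterminal is productive if it derives some terminal word. *)

From mathcomp Require Import all_boot.
Set Implicit Arguments.
Unset Strict Implicit.
Unset Printing Implicit Defensive.

Inductive sym (N T : Type) := NT of N | Tm of T.
Arguments NT {N T}.
Arguments Tm {N T}.

Record grammar (N T : Type) := Grammar {
  start : N;
  prod : N -> seq (sym N T) -> Prop }.

Inductive step N T (G : grammar N T) : seq (sym N T) -> seq (sym N T) -> Prop :=
| step_intro u v A w : prod G A w -> step G (u ++ NT A :: v) (u ++ w ++ v).

Inductive derives N T (G : grammar N T) : seq (sym N T) -> seq (sym N T) -> Prop :=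
| der_refl x : derives G x x
| der_step x y z : step G x y -> derives G y z -> derives G x z.

Definition inL N T (G : grammar N T) (w : seq T) : Prop :=
  derives G [:: NT (start G)] (map Tm w).

Definition all_productive N T (G : grammar N T) : Prop :=
  forall A : N, exists w : seq T, derives G [:: NT A] (map Tm w).

Definition normal_form N T (G : grammar N T) : Prop :=
  forall A rhs, prod G A rhs ->
    (exists B C, rhs = [:: NT B; NT C]) \/ (exists a, rhs = [:: Tm a]) \/ rhs = [::].

(* Letters a_1,...,a_n are represented by i : 'I_n (pairwise distinct). *)
Definition block_word n (k : 'I_n -> nat) : seq 'I_n :=
  flatten [seq nseq (k i) i | i <- enum 'I_n].

Definition in_blocks n (w : seq 'I_n) : Prop :=
  exists k : 'I_n -> nat, w = block_word k.

Definition in_downclosure N n (G : grammar N 'I_n) (u : seq 'I_n) : Prop :=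
  exists w, inL G w /\ subseq u w.

Definition add_eps N T (G : grammar N T) : grammar N T :=
  Grammar (start G) (fun A rhs => prod G A rhs \/ rhs = [::]).

Definition Lset N T (G : grammar N T) (a : T) (A : N) : Prop :=
  derives (add_eps G) [:: NT A] [:: Tm a; NT A].

Definition Rset N T (G : grammar N T) (a : T) (A : N) : Prop :=
  derives (add_eps G) [:: NT A] [:: NT A; Tm a].

(* G^omega: terminals are the letters a_i^omega, again represented by T
   (letter a stands for a^omega); productions A -> a are removed. *)
Definition omega_grammar N T (G : grammar N T) : grammar N T :=
  Grammar (start G) (fun A rhs =>
    (prod (add_eps G) A rhs /\ (forall a, rhs <> [:: Tm a]))
    \/ (exists a, Lset G a A /\ rhs = [:: Tm a; NT A])
    \/ (exists a, Rset G a A /\ rhs = [:: NT A; Tm a])).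

From mathcomp Require Import all_boot zify.
Set Implicit Arguments.
Unset Strict Implicit.
Unset Printing Implicit Defensive.

(* From a derivation of a_1^omega ... a_n^omega in G^omega one gets, for every K, a
   derivation of a_1^K ... a_n^K in G': a step A -> a^omega A is simulated by
   A =>* a^K A (A being in L_a), symmetrically for R_a.  A parse tree of G' becomes a
   parse tree of G for a superword once each added A -> eps is replaced by a terminal
   word of the productive A.
   Conversely, take w in L(G) having a_1^m ... a_n^m as a subword, m = 2^d, and descend
   its parse tree, keeping a factor ls of a_1 ... a_n whose m-stutter lies below the
   current node.  At a binary node the cut falls inside the block of some letter l, and
   the child receiving at least half of that block takes over at half the exponent,
   either with a strictly shorter factor or with the same one, the sibling then deriving
   l.  In the latter case the current nonterminal derives B l (or l B) in G'; when a
   nonterminal repeats along such a chain it lies in R_l (or L_l), so G^omega emits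
   l^omega and continues with a shorter factor.  Exponent d = (|N| + 1) n + |N| never
   runs out. *)

Section Derivations.
Variables (N T : Type).
Implicit Types (G : grammar N T) (x y z u v : seq (sym N T)).

Lemma derives_trans G x y z : derives G x y -> derives G y z -> derives G x z.
Proof. by elim=> // {}x {}y y' xy _ IH /IH; apply: der_step. Qed.

Lemma derives_ctx G u v x y : derives G x y -> derives G (u ++ x ++ v) (u ++ y ++ v).
Proof.
elim=> [w|w w1 w2 [p q A rhs Arhs] _ IH]; first exact: der_refl.
by apply: der_step IH; have := step_intro (u ++ p) (q ++ v) Arhs; rewrite -!catA.
Qed.

Lemma derives_cat G x x' y y' :
  derives G x x' -> derives G y y' -> derives G (x ++ y) (x' ++ y').
Proof.
move=> /(derives_ctx [::] y) xx' /(derives_ctx x' [::]); rewrite !cats0.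
exact: derives_trans xx'.
Qed.

Lemma derives1 G A rhs : prod G A rhs -> derives G [:: NT A] rhs.
Proof.
by move=> Arhs; apply: der_step (der_refl _ _); have := step_intro [::] [::] Arhs; rewrite cats0.
Qed.

Lemma derives_sub G1 G2 x y : (forall A rhs, prod G1 A rhs -> prod G2 A rhs) ->
  derives G1 x y -> derives G2 x y.
Proof.
move=> sub12; elim=> [w|w w1 w2 [p q A rhs /sub12 Arhs] _ IH]; first exact: der_refl.
exact: der_step (step_intro _ _ Arhs) IH.
Qed.

End Derivations.

Section ParseTrees.
Variables (N T : Type) (G : grammar N T).

Inductive yields : N -> seq T -> Prop :=
| yields_eps A : prod G A [::] -> yields A [::]
| yields_letter A a : prod G A [:: Tm a] -> yields A [:: a]
| yields_bin A B C u v : prod G A [:: NT B; NT C] ->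
    yields B u -> yields C v -> yields A (u ++ v).

Definition yields_sym (s : sym N T) (w : seq T) : Prop :=
  match s with NT A => yields A w | Tm a => w = [:: a] end.

Fixpoint yields_form (x : seq (sym N T)) (w : seq T) : Prop :=
  match x with
  | [::] => w = [::]
  | s :: x' => exists w1 w2, [/\ w = w1 ++ w2, yields_sym s w1 & yields_form x' w2]
  end.

Lemma yields_form_cat x y w : yields_form (x ++ y) w <->
  exists w1 w2, [/\ w = w1 ++ w2, yields_form x w1 & yields_form y w2].
Proof.
elim: x w => [|s x IH] w /=; first by split=> [|[_ [w2 [-> -> ?]]]]; first exists [::], w.
split=> [[w1 [w2 [-> s_w1 /IH [w3 [w4 [-> x_w3 y_w4]]]]]]|].
  by exists (w1 ++ w3), w4; rewrite catA; split=> //; exists w1, w3.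
move=> [_ [w2 [-> [w3 [w4 [-> s_w3 x_w4]]] y_w2]]].
by exists w3, (w4 ++ w2); rewrite catA; split=> //; apply/IH; exists w4, w2.
Qed.

Lemma yields_form_word w : yields_form (map Tm w) w.
Proof. by elim: w => //= a w IH; exists [:: a], w. Qed.

Lemma yields_form_derives x y w :
  normal_form G -> derives G x y -> yields_form y w -> yields_form x w.
Proof.
move=> nfG xy; elim: xy w => // {}x {}y z [u v A rhs Arhs] _ IH w /IH.
move=> /yields_form_cat [wu [_ [-> u_wu /yields_form_cat [wr [wv [-> rhs_wr v_wv]]]]]].
apply/yields_form_cat; exists wu, (wr ++ wv); split=> //=.
exists wr, wv; split=> //.
have [[B [C E]]|[[a E]|E]] := nfG _ _ Arhs; move: rhs_wr Arhs; rewrite E /=.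
- move=> [w1 [_ [-> B_w1 [w2 [_ [-> C_w2 ->]]]]]] Abc; rewrite cats0.
  exact: yields_bin Abc B_w1 C_w2.
- by move=> [_ [_ [-> -> ->]]]; apply: yields_letter.
- by move=> ->; apply: yields_eps.
Qed.

Lemma derives_yields A w :
  normal_form G -> derives G [:: NT A] (map Tm w) -> yields A w.
Proof.
move=> nfG /(yields_form_derives nfG)/(_ (yields_form_word w)).
by move=> [w1 [_ [-> A_w1 ->]]]; rewrite cats0.
Qed.

Lemma yields_derives A w : yields A w -> derives G [:: NT A] (map Tm w).
Proof.
elim=> {A w} [A|A a|A B C u v Abc _ IHu _ IHv]; try exact: derives1.
by rewrite map_cat; apply: derives_trans (derives1 Abc) (derives_cat IHu IHv).
Qed.

End ParseTrees.

Lemma cat_eq_cat (A : Type) (x1 x2 y1 y2 : seq A) : x1 ++ x2 = y1 ++ y2 ->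
  (exists z, y1 = x1 ++ z /\ x2 = z ++ y2) \/ (exists z, x1 = y1 ++ z /\ y2 = z ++ x2).
Proof.
elim: x1 y1 => [|a x1 IH] [|b y1] //= E.
- by left; exists [::]; rewrite E.
- by left; exists (b :: y1).
- by right; exists (a :: x1).
- move: E => [<- /IH [[z [-> ->]]|[z [-> ->]]]]; [left | right]; by exists z.
Qed.

Section Stutter.
Variable T : eqType.
Implicit Types (a : T) (s u v : seq T).

Definition stutter m s := flatten [seq nseq m a | a <- s].

Lemma stutter_cat m u v : stutter m (u ++ v) = stutter m u ++ stutter m v.
Proof. by rewrite /stutter map_cat flatten_cat. Qed.

Lemma stutter_rcons m s a : stutter m (rcons s a) = stutter m s ++ nseq m a.
Proof. by rewrite -cats1 stutter_cat /stutter /= cats0. Qed.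

Lemma size_stutter m s : size (stutter m s) = m * size s.
Proof. by elim: s => [|a s IH]; rewrite ?muln0 //= size_cat size_nseq IH mulnS. Qed.

Lemma subseq_nseq m1 m2 a : m1 <= m2 -> subseq (nseq m1 a) (nseq m2 a).
Proof. by move/subnKC <-; rewrite nseqD prefix_subseq. Qed.

Lemma subseq_stutter m1 m2 s : m1 <= m2 -> subseq (stutter m1 s) (stutter m2 s).
Proof. by move=> le_m; elim: s => //= a s IH; rewrite cat_subseq ?subseq_nseq. Qed.

Lemma subseq_catP s u v : subseq s (u ++ v) ->
  exists s1 s2, [/\ s = s1 ++ s2, subseq s1 u & subseq s2 v].
Proof.
case/subseqP=> m size_m ->; exists (mask (take (size u) m) u), (mask (drop (size u) m) v).
by rewrite -mask_cat ?cat_take_drop ?mask_subseq // size_takel // size_m size_cat leq_addr.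
Qed.

Lemma nseq_eq_cat m a u v : nseq m a = u ++ v ->
  u = nseq (size u) a /\ v = nseq (m - size u) a.
Proof.
move=> E; have : all (pred1 a) (u ++ v) by rewrite -E all_pred1_nseq.
rewrite all_cat => /andP[/all_pred1P u_a /all_pred1P v_a].
by split=> //; rewrite v_a -(size_nseq m a) E size_cat addKn.
Qed.

Lemma stutter_cut m s u v : u ++ v = stutter m s -> s != [::] ->
  exists s1 a s2 r, [/\ s = s1 ++ a :: s2, r <= m,
    u = stutter m s1 ++ nseq r a & v = nseq (m - r) a ++ stutter m s2].
Proof.
elim: s u => // a s IH u E _.
have [[z [Ez ->]]|[z [-> Ez]]] := cat_eq_cat E.
  have [u_a z_a] := nseq_eq_cat Ez.
  exists [::], a, s, (size u); rewrite z_a; split=> //.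
  by rewrite -(size_nseq m a) Ez size_cat leq_addr.
have [s0|s_nz] := eqVneq s [::].
  move: Ez; rewrite s0 /= => /esym/eqP; rewrite -nilpE cat_nilp => /andP[/nilP-> /nilP->].
  by exists [::], a, [::], m; rewrite subnn cats0.
have [s1 [b [s2 [r [-> le_r -> ->]]]]] := IH _ (esym Ez) s_nz.
by exists (a :: s1), b, s2, r; rewrite catA.
Qed.

End Stutter.

Section Pumping.
Variables (N : Type) (T : eqType) (G : grammar N T).
Local Notation G' := (add_eps G).
Local Notation Gw := (omega_grammar G).

Lemma normal_form_add_eps : normal_form G -> normal_form G'.
Proof. by move=> nfG A rhs [/nfG|->]; last by right; right. Qed.

Lemma derives_add_eps x y : derives G x y -> derives G' x y.
Proof. by apply: derives_sub => A rhs; left. Qed.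

Lemma Lset_pump a A K : Lset G a A -> derives G' [:: NT A] (nseq K (Tm a) ++ [:: NT A]).
Proof.
move=> L_A; elim: K => [|K IH]; first exact: der_refl.
exact: derives_trans L_A (derives_cat (der_refl _ [:: Tm a]) IH).
Qed.

Lemma Rset_pump a A K : Rset G a A -> derives G' [:: NT A] (NT A :: nseq K (Tm a)).
Proof.
move=> R_A; elim: K => [|K IH]; first exact: der_refl.
exact: derives_trans IH (derives_cat R_A (der_refl _ (nseq K (Tm a)))).
Qed.

Definition pump K (x : seq (sym N T)) : seq (sym N T) :=
  flatten [seq if s is Tm _ then nseq K s else [:: s] | s <- x].

Lemma pump_cat K x y : pump K (x ++ y) = pump K x ++ pump K y.
Proof. by rewrite /pump map_cat flatten_cat. Qed.

Lemma pump_word K w : pump K (map Tm w) = map Tm (stutter K w).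
Proof. by elim: w => // a w IH; rewrite map_cat map_nseq -IH. Qed.

Lemma derives_omega_pump K x y :
  normal_form G -> derives Gw x y -> derives G' (pump K x) (pump K y).
Proof.
move=> nfG; elim=> [w|w w1 w2 [u v A rhs Arhs] _ IH]; first exact: der_refl.
apply: derives_trans IH; rewrite !pump_cat; apply: derives_ctx.
case: Arhs => [[Arhs not_letter]|[[a [L_A ->]]|[a [R_A ->]]]].
- suff -> : pump K rhs = rhs by exact: derives1.
  by case: Arhs => [/nfG [[B [C ->]]|[[a E]|->]]|->] //; case: (not_letter a).
- exact: Lset_pump.
- by rewrite /pump /= cats0; exact: Rset_pump.
Qed.

Lemma yields_add_eps A w' : normal_form G -> all_productive G ->
  yields G' A w' -> exists2 w, yields G A w & subseq w' w.
Proof.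
move=> nfG prodG; elim=> {A w'} [A [A_eps|_]|A a [A_a|//]|A B C u v [A_BC|//] _ IHu _ IHv].
- by exists [::]; first exact: yields_eps.
- by have [w /(derives_yields nfG) A_w] := prodG A; exists w; rewrite ?sub0seq.
- by exists [:: a]; first exact: yields_letter.
- have [u' B_u' sub_u] := IHu; have [v' C_v' sub_v] := IHv.
  by exists (u' ++ v'); [apply: yields_bin A_BC B_u' C_v' | apply: cat_subseq].
Qed.

End Pumping.

Section Unpumping.
Variables (N : finType) (T : eqType) (G : grammar N T).
Local Notation G' := (add_eps G).
Local Notation Gw := (omega_grammar G).
Implicit Types (A B C X : N) (a l : T) (ls t : seq T) (V : {set N}).

Lemma derives_add_eps_nil A : derives G' [:: NT A] [::].
Proof. by apply: derives1; right. Qed.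

Lemma derives_add_eps_left A B C :
  prod G' A [:: NT B; NT C] -> derives G' [:: NT A] [:: NT B].
Proof.
move=> A_BC; apply: derives_trans (derives1 A_BC) _.
by have := derives_cat (der_refl _ [:: NT B]) (derives_add_eps_nil C); rewrite cats0.
Qed.

Lemma derives_add_eps_right A B C :
  prod G' A [:: NT B; NT C] -> derives G' [:: NT A] [:: NT C].
Proof.
move=> A_BC; apply: derives_trans (derives1 A_BC) _.
exact: derives_cat (derives_add_eps_nil B) (der_refl _ [:: NT C]).
Qed.

Lemma yields_mem_derives B w a : yields G' B w -> a \in w -> derives G' [:: NT B] [:: Tm a].
Proof.
elim=> {B w} [//|B b B_b|B B1 B2 u v B_12 _ IHu _ IHv].
  by rewrite inE => /eqP->; apply: derives1.
rewrite mem_cat => /orP[/IHu D1|/IHv D2]; apply: derives_trans (derives1 B_12) _.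
  by have := derives_cat D1 (derives_add_eps_nil B2); rewrite cats0.
exact: derives_cat (derives_add_eps_nil B1) D2.
Qed.

Lemma derives_omega_nil A : derives Gw [:: NT A] [::].
Proof. by apply: derives1; left; split=> //; right. Qed.

Lemma derives_omega_bin A B C x y : prod G' A [:: NT B; NT C] ->
  derives Gw [:: NT B] x -> derives Gw [:: NT C] y -> derives Gw [:: NT A] (x ++ y).
Proof.
move=> A_BC B_x C_y; apply: derives_trans _ (derives_cat B_x C_y).
by apply: derives1; left.
Qed.

Lemma derives_omega_left A B C x : prod G' A [:: NT B; NT C] ->
  derives Gw [:: NT B] x -> derives Gw [:: NT A] x.
Proof.
by move=> A_BC B_x; have := derives_omega_bin A_BC B_x (derives_omega_nil C); rewrite cats0.
Qed.

Lemma derives_omega_right A B C x : prod G' A [:: NT B; NT C] ->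
  derives Gw [:: NT C] x -> derives Gw [:: NT A] x.
Proof. by move=> A_BC; apply: derives_omega_bin A_BC (derives_omega_nil B). Qed.

Lemma derives_omega_Lset a A t :
  Lset G a A -> derives Gw [:: NT A] (map Tm t) -> derives Gw [:: NT A] (map Tm (a :: t)).
Proof.
move=> L_A A_t; apply: derives_trans _ (derives_cat (der_refl _ [:: Tm a]) A_t).
by apply: derives1; right; left; exists a.
Qed.

Lemma derives_omega_Rset a A t :
  Rset G a A -> derives Gw [:: NT A] (map Tm t) -> derives Gw [:: NT A] (map Tm (rcons t a)).
Proof.
move=> R_A A_t; rewrite -cats1 map_cat.
apply: derives_trans _ (derives_cat A_t (der_refl _ [:: Tm a])).
by apply: derives1; right; right; exists a.
Qed.

(* Holds for every nonterminal X visited since [ls] last shrank; revisiting A thus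
   gives [Lset G l A] or [Rset G l A]. *)
Definition flanks ls X A : Prop :=
  (exists l t, ls = l :: t /\ derives G' [:: NT X] [:: Tm l; NT A]) \/
  (exists t l, ls = rcons t l /\ derives G' [:: NT X] [:: NT A; Tm l]).

Lemma flanks_trans ls X A B :
  flanks ls X A -> derives G' [:: NT A] [:: NT B] -> flanks ls X B.
Proof.
move=> [[l [t [-> X_lA]]]|[t [l [-> X_Al]]]] A_B; [left; exists l, t | right; exists t, l].
  by split=> //; apply: derives_trans X_lA (derives_cat (der_refl _ [:: Tm l]) A_B).
by split=> //; apply: derives_trans X_Al (derives_cat A_B (der_refl _ [:: Tm l])).
Qed.

(* Each descent halves the exponent and either shortens [ls] or visits a new
   nonterminal; at most #|N| visits happen between two shortenings. *)
Definition budget ls V : nat := #|N|.+1 * size ls + (#|N| - #|V|).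

Lemma budget_gt0 ls V : ls != [::] -> 0 < budget ls V.
Proof. by rewrite /budget -size_eq0 -lt0n => ?; rewrite ltn_addr // muln_gt0. Qed.

Lemma budget_shorter ls t V d : size t < size ls -> budget ls V <= d -> budget t set0 < d.
Proof. by rewrite /budget cards0 subn0; nia. Qed.

Lemma budget_setU1 ls A V d : A \notin V -> budget ls V <= d -> budget ls (A |: V) < d.
Proof.
move=> A_V; have := max_card (A |: V); rewrite /budget cardsU1 A_V; lia.
Qed.

(* At a binary node A -> B C, the cut of stutter (2 ^ d.+1) ls between the words below
   B and C leaves r copies of l on the left; the child receiving at least 2 ^ d of them
   takes over at exponent d. *)
Section BinaryStep.
Variables (ls : seq T) (A B C : N) (w1 w2 : seq T).
Hypothesis A_BC : prod G' A [:: NT B; NT C].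
Hypothesis B_w1 : yields G' B w1.
Hypothesis C_w2 : yields G' C w2.
Hypothesis IHshort : forall t X w d, size t < size ls -> yields G' X w ->
  subseq (stutter (2 ^ d) t) w -> budget t set0 <= d -> derives Gw [:: NT X] (map Tm t).
Hypothesis IHB : forall V d, {in V, forall X, flanks ls X B} ->
  subseq (stutter (2 ^ d) ls) w1 -> budget ls V <= d -> derives Gw [:: NT B] (map Tm ls).
Hypothesis IHC : forall V d, {in V, forall X, flanks ls X C} ->
  subseq (stutter (2 ^ d) ls) w2 -> budget ls V <= d -> derives Gw [:: NT C] (map Tm ls).
Variables (V : {set N}) (d : nat).
Hypothesis A_notin_V : A \notin V.
Hypothesis flanks_V : {in V, forall X, flanks ls X A}.
Hypothesis budget_V : budget ls V <= d.+1.
Variables (ls1 ls2 : seq T) (l : T) (r : nat).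
Hypothesis ls_cut : ls = ls1 ++ l :: ls2.
Hypothesis le_r : r <= 2 ^ d.+1.
Hypothesis sub_w1 : subseq (stutter (2 ^ d.+1) ls1 ++ nseq r l) w1.
Hypothesis sub_w2 : subseq (nseq (2 ^ d.+1 - r) l ++ stutter (2 ^ d.+1) ls2) w2.

Let le_exp2S : 2 ^ d <= 2 ^ d.+1. Proof. by rewrite leq_exp2l. Qed.

Let IHpart t X w : size t < size ls -> yields G' X w ->
  subseq (stutter (2 ^ d) t) w -> derives Gw [:: NT X] (map Tm t).
Proof. by move=> lt_t X_w sub; apply: IHshort lt_t X_w sub (budget_shorter lt_t budget_V). Qed.

Lemma yields_omega_bin_left : 2 ^ d <= r -> derives Gw [:: NT A] (map Tm ls).
Proof.
move=> le_dr; have sub_w1' : subseq (stutter (2 ^ d) (rcons ls1 l)) w1.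
  by apply: subseq_trans sub_w1; rewrite stutter_rcons cat_subseq ?subseq_stutter ?subseq_nseq.
have [ls2_nil|ls2_nz] := eqVneq ls2 [::]; last first.
  have ls_rcons : ls = rcons ls1 l ++ ls2 by rewrite ls_cut cat_rcons.
  rewrite ls_rcons map_cat; apply: derives_omega_bin A_BC _ _.
    apply: IHpart B_w1 sub_w1'; move: ls2_nz.
    by rewrite ls_cut size_cat size_rcons /= -size_eq0; lia.
  apply: IHpart C_w2 _; first by rewrite ls_cut size_cat /= addnS ltnS leq_addl.
  apply: subseq_trans (subseq_stutter _ le_exp2S) _.
  exact: subseq_trans (suffix_subseq _ _) sub_w2.
have ls_rcons : ls = rcons ls1 l by rewrite ls_cut ls2_nil cats1.
have flanks_B : {in V, forall X, flanks ls X B}.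
  by move=> X /flanks_V X_A; apply: flanks_trans X_A (derives_add_eps_left A_BC).
have [r_full|r_part] := eqVneq r (2 ^ d.+1).
  apply: derives_omega_left A_BC (IHB flanks_B _ budget_V).
  by move: sub_w1; rewrite ls_rcons stutter_rcons r_full.
have l_w2 : l \in w2.
  apply: (mem_subseq sub_w2); rewrite mem_cat mem_nseq subn_gt0 eqxx.
  by rewrite ltn_neqAle r_part le_r.
have A_Bl : derives G' [:: NT A] [:: NT B; Tm l].
  apply: derives_trans (derives1 A_BC) _.
  exact: derives_cat (der_refl _ [:: NT B]) (yields_mem_derives C_w2 l_w2).
apply: derives_omega_left A_BC (IHB (V := A |: V) (d := d) _ _ _).
- move=> X /setU1P[->|/flanks_B //]; by right; exists ls1, l.
- by rewrite ls_rcons.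
- exact: budget_setU1 A_notin_V budget_V.
Qed.

Lemma yields_omega_bin_right : r <= 2 ^ d -> derives Gw [:: NT A] (map Tm ls).
Proof.
move=> le_rd; have sub_w2' : subseq (stutter (2 ^ d) (l :: ls2)) w2.
  apply: subseq_trans sub_w2; rewrite cat_subseq ?subseq_stutter ?subseq_nseq //.
  by move: le_rd; rewrite expnS; lia.
have [ls1_nil|ls1_nz] := eqVneq ls1 [::]; last first.
  rewrite ls_cut map_cat; apply: derives_omega_bin A_BC _ _.
    apply: IHpart B_w1 _; first by rewrite ls_cut size_cat /= addnS ltnS leq_addr.
    apply: subseq_trans (subseq_stutter _ le_exp2S) _.
    exact: subseq_trans (prefix_subseq _ _) sub_w1.
  apply: IHpart C_w2 sub_w2'; move: ls1_nz.
  by rewrite ls_cut size_cat /= -size_eq0; lia.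
have ls_cons : ls = l :: ls2 by rewrite ls_cut ls1_nil.
have flanks_C : {in V, forall X, flanks ls X C}.
  by move=> X /flanks_V X_A; apply: flanks_trans X_A (derives_add_eps_right A_BC).
have [r_nil|r_pos] := eqVneq r 0.
  apply: derives_omega_right A_BC (IHC flanks_C _ budget_V).
  by move: sub_w2; rewrite ls_cons r_nil subn0.
have l_w1 : l \in w1.
  by apply: (mem_subseq sub_w1); rewrite mem_cat mem_nseq lt0n r_pos eqxx orbT.
have A_lC : derives G' [:: NT A] [:: Tm l; NT C].
  apply: derives_trans (derives1 A_BC) _.
  exact: derives_cat (yields_mem_derives B_w1 l_w1) (der_refl _ [:: NT C]).
apply: derives_omega_right A_BC (IHC (V := A |: V) (d := d) _ _ _).
- move=> X /setU1P[->|/flanks_C //]; by left; exists l, ls2.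
- by rewrite ls_cons.
- exact: budget_setU1 A_notin_V budget_V.
Qed.

End BinaryStep.

Lemma yields_omega_derives ls A w V d : yields G' A w -> {in V, forall X, flanks ls X A} ->
  subseq (stutter (2 ^ d) ls) w -> budget ls V <= d -> derives Gw [:: NT A] (map Tm ls).
Proof.
have [k] := ubnP (size ls); elim: k ls A w V d => // k IHk ls A w V d /ltnSE le_ls A_w.
have [-> _ _ _|ls_nz] := eqVneq ls [::]; first exact: derives_omega_nil.
have IHshort t X w' d' : size t < size ls -> yields G' X w' ->
    subseq (stutter (2 ^ d') t) w' -> budget t set0 <= d' -> derives Gw [:: NT X] (map Tm t).
  by move=> lt_t X_w'; apply: IHk (leq_trans lt_t le_ls) X_w' _ => ?; rewrite in_set0.
have size_gt1 d' w' : subseq (stutter (2 ^ d'.+1) ls) w' -> 1 < size w'.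
  move/size_subseq; rewrite size_stutter expnS; move: ls_nz; rewrite -size_eq0.
  by have := expn_gt0 2 d'; nia.
elim: A_w V d => {A w} [A _|A a _|A B C u v A_BC B_u IHB C_v IHC] V [|d] flV sub bud;
  try by move: bud; rewrite leqNgt budget_gt0.
- by have := size_gt1 _ _ sub.
- by have := size_gt1 _ _ sub.
have [A_V|A_notin_V] := boolP (A \in V).
  have A_uv := yields_bin A_BC B_u C_v.
  case: (flV A A_V) => [[l [t [ls_cons L_A]]]|[t [l [ls_rcons R_A]]]].
    rewrite ls_cons; apply/(derives_omega_Lset L_A)/(IHshort _ _ _ d.+1 _ A_uv).
    - by rewrite ls_cons.
    - by apply: subseq_trans sub; rewrite ls_cons suffix_subseq.
    - by apply/ltnW/(budget_shorter _ bud); rewrite ls_cons.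
  rewrite ls_rcons; apply/(derives_omega_Rset R_A)/(IHshort _ _ _ d.+1 _ A_uv).
  - by rewrite ls_rcons size_rcons.
  - by apply: subseq_trans sub; rewrite ls_rcons stutter_rcons prefix_subseq.
  - by apply/ltnW/(budget_shorter _ bud); rewrite ls_rcons size_rcons.
have [e1 [e2 [E sub_u sub_v]]] := subseq_catP sub.
have [ls1 [l [ls2 [r [ls_cut le_r E1 E2]]]]] := stutter_cut (esym E) ls_nz.
rewrite E1 in sub_u; rewrite E2 in sub_v.
have [le_dr|/ltnW le_rd] := leqP (2 ^ d) r.
  exact: (yields_omega_bin_left A_BC B_u C_v IHshort IHB A_notin_V flV bud
            ls_cut le_r sub_u sub_v le_dr).
exact: (yields_omega_bin_right A_BC B_u C_v IHshort IHC A_notin_V flV bud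
          ls_cut le_r sub_u sub_v le_rd).
Qed.

End Unpumping.

Lemma subseq_block_word n (k : 'I_n -> nat) K :
  (forall i, k i <= K) -> subseq (block_word k) (stutter K (enum 'I_n)).
Proof.
move=> le_kK; rewrite /block_word; elim: (enum 'I_n) => //= i s IH.
exact: cat_subseq (subseq_nseq _ (le_kK i)) IH.
Qed.

Theorem mainTheorem11 (N : finType) (n : nat) (G : grammar N 'I_n)
  (Hprod : all_productive G)
  (Hnf : normal_form G)
  (Hbl : forall w, inL G w -> in_blocks w) :
  inL (omega_grammar G) (enum 'I_n) <->
  (forall k : 'I_n -> nat, in_downclosure G (block_word k)).
Proof.
have nfG' := normal_form_add_eps Hnf.
split=> [S_omega k | down].
  have := derives_omega_pump (\max_i k i) Hnf S_omega; rewrite pump_word.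
  move=> /(derives_yields nfG')/(yields_add_eps Hnf Hprod) [w S_w sub].
  exists w; split; first exact: yields_derives S_w.
  by apply: subseq_trans sub; apply: subseq_block_word => i; apply: leq_bigmax.
pose d := budget (enum 'I_n) (set0 : {set N}).
have [w [S_w sub]] := down (fun=> 2 ^ d).
apply: yields_omega_derives (derives_yields nfG' (derives_add_eps S_w)) _ sub (leqnn d).
by move=> ?; rewrite in_set0.
Qed.
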